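(* Fix $j\in\mathbb{Z}$ and let $k_n=\lfloor\log_2 n+\log_2\log_2 n\rfloor+j$. Then, under the conditional distribution given $X_n^*=2^{k_n}$, \[ \frac{S_n}{X_n^*}-2^{-j}\,2^{\{\log_2 n+\log_2\log_2 n\}}\xrightarrow{\ \mathbb{P}\ }1 . \]
   Context: $X_1,X_2,\ldots$ are iid with $\mathbb{P}\{X_i=2^k\}=2^{-k}$, $k\in\{1,2,\ldots\}$; $S_n=\sum_{i\le n}X_i$, $X_n^*=\max_{i\le n}X_i$; $\{y\}$ denotes the fractional part of $y$. Convergence in conditional probability means that for every $\varepsilon>0$ the conditional probability (given $X_n^*=2^{k_n}$) that the left side differs from $1$ by more than $\varepsilon$ tends to $0$. *)

From Stdlib Require Export Reals List.
Import ListNotations.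
Open Scope R_scope.

(* A sample point (X_1,...,X_n) is encoded by its list of exponents
   [e_1; ...; e_n], with X_i = 2^(e_i), e_i >= 1. *)

Fixpoint exp_tuples (n k : nat) : list (list nat) :=
  match n with
  | O => [[]]
  | S m => flat_map (fun e => map (cons e) (exp_tuples m k)) (seq 1 k)
  end.

(* P{X_1 = 2^(e_1), ..., X_n = 2^(e_n)} = prod_i 2^(-e_i). *)
Definition weight (e : list nat) : R :=
  fold_right (fun a r => (/ 2) ^ a * r) 1 e.

Definition max_exp (e : list nat) : nat := fold_right Nat.max 0%nat e.

Definition S_of (e : list nat) : R := fold_right (fun a r => 2 ^ a + r) 0 e.

Definition mass (n k : nat) (A : list nat -> bool) : R :=
  fold_right Rplus 0
    (map weight
       (filter (fun e => andb (Nat.eqb (max_exp e) k) (A e)) (exp_tuples n k))).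

(* P( A | X_n^* = 2^k ) for k >= 1.  On {X_n^* = 2^k} every X_i <= 2^k,
   so the conditioning event is exactly the finite set enumerated above. *)
Definition cond_prob (n k : nat) (A : list nat -> bool) : R :=
  mass n k A / mass n k (fun _ => true).

Definition log2 (x : R) : R := ln x / ln 2.

Definition k_seq (j : Z) (n : nat) : Z :=
  (Int_part (log2 (INR n) + log2 (log2 (INR n))) + j)%Z.

From Stdlib Require Import Reals List Lra Lia ZArith.
Import ListNotations.
Open Scope R_scope.

(* Write k = k_n, D = 2^k and c = 2^(-j) 2^({log2 n + log2 log2 n}), so that
   c D = n log2 n.  The proof is a second-moment (Chebyshev) argument for the
   conditional law, carried out on the finite weighted sums.

   1. [wsum k m f] is the weighted sum of f over the exponent tuples in
      {1..k}^m, i.e. E[f; all X_i <= 2^k]; it factorises coordinatewise, which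
      gives closed forms for its moments of order 0, 1, 2 in S_m.
   2. Conditioning on the maximum: the event {X_n^* = 2^k} has mass at least
      n 2^(-k) (1 - 2^(1-k))^(n-1), and a union bound over the coordinate that
      attains the maximum bounds the conditional mass of {|S_n/D - c - 1| > eps}
      by n 2^(-k) eps^(-2) E[(S_(n-1)/D - c)^2; all X_i <= 2^k].  Together
      with the moment formulas this is the explicit estimate [conditional_chebyshev].
   3. Asymptotics: k_n / log2 n -> 1 and n/D -> 0, and the explicit estimate
      tends to 0 in this regime ([chebyshev_bound_small], [k_seq_regime]). *)

Definition sumf {A} (f : A -> R) (l : list A) : R := fold_right (fun x r => f x + r) 0 l.

Lemma sumf_app {A} (f : A -> R) l1 l2 : sumf f (l1 ++ l2) = sumf f l1 + sumf f l2.
Proof. induction l1; simpl; [ring| rewrite IHl1; ring]. Qed.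

Lemma sumf_map {A B} (f : B -> R) (g : A -> B) l : sumf f (map g l) = sumf (fun x => f (g x)) l.
Proof. induction l; simpl; [ring| rewrite IHl; ring]. Qed.

Lemma sumf_flat_map {A B} (f : B -> R) (g : A -> list B) l :
  sumf f (flat_map g l) = sumf (fun x => sumf f (g x)) l.
Proof. induction l; simpl; [ring| rewrite sumf_app, IHl; ring]. Qed.

Lemma sumf_ext {A} (f g : A -> R) l : (forall x, In x l -> f x = g x) -> sumf f l = sumf g l.
Proof. induction l; simpl; intros H; [ring|]. rewrite H, IHl; auto. Qed.

Lemma sumf_le {A} (f g : A -> R) l : (forall x, In x l -> f x <= g x) -> sumf f l <= sumf g l.
Proof.
  induction l; simpl; intros H; [lra|].
  specialize (IHl (fun x h => H x (or_intror h))).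
  specialize (H a (or_introl eq_refl)). lra.
Qed.

Lemma sumf_nonneg {A} (f : A -> R) l : (forall x, In x l -> 0 <= f x) -> 0 <= sumf f l.
Proof.
  induction l; simpl; intros H; [lra|].
  specialize (IHl (fun x h => H x (or_intror h))).
  specialize (H a (or_introl eq_refl)). lra.
Qed.

Lemma sumf_lin {A} (f g : A -> R) p q l :
  sumf (fun x => p * f x + q * g x) l = p * sumf f l + q * sumf g l.
Proof. induction l; simpl; [ring| rewrite IHl; ring]. Qed.

Lemma sumf_lin3 {A} (f g h : A -> R) p q r l :
  sumf (fun x => p * f x + q * g x + r * h x) l = p * sumf f l + q * sumf g l + r * sumf h l.
Proof. induction l; simpl; [ring| rewrite IHl; ring]. Qed.

Lemma sumf_scal {A} (f : A -> R) p l : sumf (fun x => p * f x) l = p * sumf f l.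
Proof. induction l; simpl; [ring| rewrite IHl; ring]. Qed.

Lemma sumf_single {A} (f : A -> R) x : sumf f [x] = f x.
Proof. unfold sumf; simpl; ring. Qed.

Lemma sumf_filter_indicator {A} (g : A -> R) (p : A -> bool) l :
  fold_right Rplus 0 (map g (filter p l)) = sumf (fun x => g x * (if p x then 1 else 0)) l.
Proof. induction l; simpl; auto. destruct (p a); simpl; rewrite IHl; ring. Qed.

(* Weighted sums over the tuples {1..k}^m: wsum k m f = E[f; X_1..X_m <= 2^k]. *)
Section WeightedSum.
Variable k : nat.

Definition wsum (m : nat) (f : list nat -> R) : R :=
  sumf (fun e => weight e * f e) (exp_tuples m k).

Lemma wsum_0 f : wsum 0 f = f [].
Proof. unfold wsum; simpl. ring. Qed.

Lemma wsum_S m f :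
  wsum (S m) f = sumf (fun a => (/2)^a * wsum m (fun t => f (a :: t))) (seq 1 k).
Proof.
  unfold wsum; simpl exp_tuples. rewrite sumf_flat_map. apply sumf_ext; intros a _.
  rewrite sumf_map, <- sumf_scal. apply sumf_ext; intros; simpl; ring.
Qed.

Lemma weight_nonneg e : 0 <= weight e.
Proof. induction e; simpl; [lra|]. apply Rmult_le_pos; auto. apply pow_le; lra. Qed.

Lemma wsum_ext m f g : (forall t, In t (exp_tuples m k) -> f t = g t) -> wsum m f = wsum m g.
Proof. intros H; unfold wsum; apply sumf_ext; intros; rewrite H; auto. Qed.

Lemma wsum_le m f g : (forall t, In t (exp_tuples m k) -> f t <= g t) -> wsum m f <= wsum m g.
Proof.
  intros H; unfold wsum; apply sumf_le; intros.
  apply Rmult_le_compat_l; auto using weight_nonneg.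
Qed.

Lemma wsum_nonneg m f : (forall t, In t (exp_tuples m k) -> 0 <= f t) -> 0 <= wsum m f.
Proof.
  intros H; unfold wsum; apply sumf_nonneg; intros.
  apply Rmult_le_pos; auto using weight_nonneg.
Qed.

Lemma wsum_lin m f g p q : wsum m (fun t => p * f t + q * g t) = p * wsum m f + q * wsum m g.
Proof. unfold wsum. rewrite <- sumf_lin. apply sumf_ext; intros; ring. Qed.

Lemma wsum_lin3 m f g h p q r :
  wsum m (fun t => p * f t + q * g t + r * h t) = p * wsum m f + q * wsum m g + r * wsum m h.
Proof. unfold wsum. rewrite <- sumf_lin3. apply sumf_ext; intros; ring. Qed.

Lemma max_exp_tuples m t : In t (exp_tuples m k) -> (max_exp t <= k)%nat.
Proof.
  revert t; induction m; simpl; intros t H.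
  - destruct H as [<-|[]]; simpl; lia.
  - apply in_flat_map in H as [a [Ha Ht]]. apply in_map_iff in Ht as [t' [<- Ht']].
    apply in_seq in Ha. simpl. specialize (IHm _ Ht'). lia.
Qed.

End WeightedSum.

Lemma mass_wsum n k A :
  mass n k A = wsum k n (fun e => if andb (Nat.eqb (max_exp e) k) (A e) then 1 else 0).
Proof. unfold mass, wsum. apply sumf_filter_indicator. Qed.

(* Moments of order 0, 1, 2 of S_m on the event {X_1, ..., X_m <= 2^k}.  By
   independence they follow from those of one truncated variable:
   P(X <= 2^k), E[X; X <= 2^k] and E[X^2; X <= 2^k]. *)
Section Moments.
Variable k : nat.

Definition ptrunc := sumf (fun a => (/2)^a) (seq 1 k).
Definition mom1 := sumf (fun a => (/2)^a * 2^a) (seq 1 k).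
Definition mom2 := sumf (fun a => (/2)^a * (2^a)^2) (seq 1 k).

Lemma wsum_one m : wsum k m (fun _ => 1) = ptrunc ^ m.
Proof.
  induction m; [rewrite wsum_0; reflexivity|].
  rewrite wsum_S. simpl pow. rewrite <- IHm. unfold ptrunc.
  rewrite Rmult_comm, <- sumf_scal. apply sumf_ext; intros. ring.
Qed.

Lemma wsum_S_of_step m :
  wsum k (S m) S_of = mom1 * ptrunc ^ m + ptrunc * wsum k m S_of.
Proof.
  assert (first_coord : forall a, wsum k m (fun t => S_of (a :: t))
                                  = 2^a * wsum k m (fun _ => 1) + 1 * wsum k m S_of).
  { intros a. rewrite <- wsum_lin. apply wsum_ext; intros; simpl; ring. }
  rewrite wsum_S, <- wsum_one.
  transitivity (sumf (fun a => wsum k m (fun _ => 1) * ((/2)^a * 2^a)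
                               + wsum k m S_of * (/2)^a) (seq 1 k)).
  - apply sumf_ext; intros a _. rewrite first_coord. ring.
  - rewrite (sumf_lin (fun a => (/2)^a * 2^a) (fun a => (/2)^a)). unfold mom1, ptrunc. ring.
Qed.

Lemma wsum_S_of_sq_step m :
  wsum k (S m) (fun t => S_of t ^ 2)
  = mom2 * ptrunc ^ m + 2 * mom1 * wsum k m S_of + ptrunc * wsum k m (fun t => S_of t ^ 2).
Proof.
  assert (first_coord : forall a, wsum k m (fun t => S_of (a :: t) ^ 2)
            = (2^a)^2 * wsum k m (fun _ => 1) + (2 * 2^a) * wsum k m S_of
              + 1 * wsum k m (fun t => S_of t ^ 2)).
  { intros a. rewrite <- wsum_lin3. apply wsum_ext; intros; simpl; ring. }
  rewrite wsum_S, <- wsum_one.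
  transitivity (sumf (fun a => wsum k m (fun _ => 1) * ((/2)^a * (2^a)^2)
                               + (2 * wsum k m S_of) * ((/2)^a * 2^a)
                               + wsum k m (fun t => S_of t ^ 2) * (/2)^a) (seq 1 k)).
  - apply sumf_ext; intros a _. rewrite first_coord. ring.
  - rewrite (sumf_lin3 (fun a => (/2)^a * (2^a)^2) (fun a => (/2)^a * 2^a) (fun a => (/2)^a)).
    unfold mom1, mom2, ptrunc. ring.
Qed.

Lemma wsum_S_of m : ptrunc * wsum k m S_of = INR m * mom1 * ptrunc ^ m.
Proof.
  induction m; [rewrite wsum_0; simpl; ring|].
  rewrite wsum_S_of_step, Rmult_plus_distr_l, <- Rmult_assoc, (Rmult_comm ptrunc), Rmult_assoc,
    IHm, S_INR.
  simpl; ring.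
Qed.

Lemma wsum_S_of_sq m :
  ptrunc^2 * wsum k m (fun t => S_of t ^ 2)
  = INR m * mom2 * ptrunc ^ (S m) + INR m * (INR m - 1) * mom1^2 * ptrunc^m.
Proof.
  induction m; [rewrite wsum_0; simpl; ring|].
  rewrite wsum_S_of_sq_step.
  replace (ptrunc^2 * (mom2 * ptrunc ^ m + 2 * mom1 * wsum k m S_of
                       + ptrunc * wsum k m (fun t => S_of t ^ 2)))
    with (mom2 * ptrunc^(S (S m)) + 2 * mom1 * ptrunc * (ptrunc * wsum k m S_of)
          + ptrunc * (ptrunc^2 * wsum k m (fun t => S_of t ^ 2))) by (simpl; ring).
  rewrite IHm, wsum_S_of, S_INR. simpl; ring.
Qed.

End Moments.

Lemma ptrunc_val k : ptrunc k = 1 - (/2)^k.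
Proof.
  unfold ptrunc. induction k; [unfold sumf; simpl; ring|].
  rewrite seq_S, sumf_app, IHk. unfold sumf at 1; simpl. field.
Qed.

Lemma mom1_val k : mom1 k = INR k.
Proof.
  unfold mom1. induction k; [unfold sumf; simpl; ring|].
  rewrite seq_S, sumf_app, IHk, S_INR. unfold sumf at 1; simpl.
  rewrite pow_inv. field. apply pow_nonzero; lra.
Qed.

Lemma mom2_val k : mom2 k = 2 ^ (S k) - 2.
Proof.
  unfold mom2. induction k; [unfold sumf; simpl; ring|].
  rewrite seq_S, sumf_app, IHk. unfold sumf at 1; simpl.
  rewrite pow_inv. field. apply pow_nonzero; lra.
Qed.

Lemma pow_unit_interval x m : 0 <= x <= 1 -> 0 <= x ^ m <= 1.
Proof. intros H; induction m; simpl; [lra|]. split; [apply Rmult_le_pos; lra| nra]. Qed.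

Lemma second_moment_bound k m D c : 0 < D -> 0 < ptrunc k <= 1 -> 0 <= mom2 k ->
  wsum k m (fun t => (S_of t / D - c)^2)
  <= (INR m * mom2 k / D^2 + (INR m * mom1 k / D - c * ptrunc k)^2) / ptrunc k ^ 2.
Proof.
  intros HD Hz Hm2.
  assert (expand : wsum k m (fun t => (S_of t / D - c)^2)
          = (/D^2) * wsum k m (fun t => S_of t ^ 2) + (-2*c/D) * wsum k m S_of
            + c^2 * wsum k m (fun _ => 1)).
  { rewrite <- wsum_lin3. apply wsum_ext; intros. field. lra. }
  rewrite expand. apply Rmult_le_reg_l with (ptrunc k ^ 2); [apply pow_lt; lra|].
  replace (ptrunc k ^ 2 * (/ D ^ 2 * wsum k m (fun t => S_of t ^ 2) + -2 * c / D * wsum k m S_of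
                           + c ^ 2 * wsum k m (fun _ => 1)))
    with ((ptrunc k ^2 * wsum k m (fun t => S_of t ^ 2)) / D^2
          - 2*c/D * ptrunc k * (ptrunc k * wsum k m S_of) + c^2 * ptrunc k^2 * wsum k m (fun _ => 1))
    by (field; lra).
  rewrite wsum_S_of_sq, wsum_S_of, wsum_one.
  replace (ptrunc k ^ 2 * ((INR m * mom2 k / D ^ 2 + (INR m * mom1 k / D - c * ptrunc k) ^ 2)
                           / ptrunc k ^ 2))
    with (INR m * mom2 k / D ^ 2 + (INR m * mom1 k / D - c * ptrunc k) ^ 2) by (field; lra).
  pose proof (pow_unit_interval (ptrunc k) m ltac:(lra)) as [Hp0 Hp1].
  set (p := ptrunc k ^ m) in *. set (z := ptrunc k) in *.
  change (z ^ S m) with (z * p).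
  assert (Hvar : 0 <= INR m * mom2 k / D^2).
  { apply Rmult_le_pos; [apply Rmult_le_pos; auto; apply pos_INR|].
    apply Rlt_le, Rinv_0_lt_compat, pow_lt; lra. }
  assert (Hmean : 0 <= INR m * mom1 k ^ 2 / D^2).
  { apply Rmult_le_pos; [apply Rmult_le_pos; [apply pos_INR| apply pow2_ge_0]|].
    apply Rlt_le, Rinv_0_lt_compat, pow_lt; lra. }
  replace ((INR m * mom2 k * (z * p) + INR m * (INR m - 1) * mom1 k ^ 2 * p) / D ^ 2
           - 2 * c / D * z * (INR m * mom1 k * p) + c ^ 2 * z ^ 2 * p)
    with (INR m * mom2 k / D^2 * (z * p)
          + p * ((INR m * mom1 k / D - c * z) ^ 2 - INR m * mom1 k ^ 2 / D^2)) by (field; lra).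
  set (a := INR m * mom2 k / D^2) in *. set (Y := INR m * mom1 k ^ 2 / D^2) in *.
  set (X := (INR m * mom1 k / D - c * z) ^ 2).
  assert (0 <= X) by apply pow2_ge_0.
  assert (z * p <= 1) by nra.
  nra.
Qed.

Lemma truncated_second_moment k m c : (1 <= k)%nat ->
  let D := 2 ^ k in
  wsum k m (fun t => (S_of t / D - c)^2)
  <= (2 * (INR m / D) + (INR m * INR k / D - c * (1 - / D))^2) / (1 - / D)^2.
Proof.
  intros Hk D.
  assert (HD : 2 <= D) by (unfold D; replace 2 with (2^1) at 1 by ring; apply Rle_pow; [lra| lia]).
  assert (Hz : ptrunc k = 1 - / D) by (rewrite ptrunc_val; unfold D; rewrite pow_inv; reflexivity).
  assert (Hm2 : mom2 k = 2 * D - 2) by (rewrite mom2_val; reflexivity).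
  assert (HiD : 0 < / D <= 1/2).
  { split; [apply Rinv_0_lt_compat; lra|]. replace (1/2) with (/2) by field.
    apply Rinv_le_contravar; lra. }
  eapply Rle_trans; [apply second_moment_bound; rewrite ?Hz, ?Hm2; lra|].
  rewrite Hz, Hm2, mom1_val.
  apply Rmult_le_compat_r; [apply Rlt_le, Rinv_0_lt_compat, pow_lt; lra|].
  apply Rplus_le_compat_r. unfold Rdiv. rewrite <- pow_inv.
  assert (0 <= INR m) by apply pos_INR.
  assert (INR m * (2 * D - 2) * (/D)^2 <= INR m * (2 * D) * (/D)^2).
  { apply Rmult_le_compat_r; [apply pow2_ge_0|]. apply Rmult_le_compat_l; lra. }
  replace (2 * (INR m * /D)) with (INR m * (2 * D) * (/D)^2) by (field; lra). lra.
Qed.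

(* Splitting a sum over {1..S k'}^(S m) restricted to {max = S k'} by the first
   coordinate: either it is below the maximum and the rest attains it, or it
   is the maximum itself and the rest is unconstrained. *)
Lemma wsum_split_max k' m g :
  wsum (S k') (S m) (fun t => if Nat.eqb (max_exp t) (S k') then g t else 0) =
  sumf (fun a => (/2)^a * wsum (S k') m
                   (fun t => if Nat.eqb (max_exp t) (S k') then g (a :: t) else 0)) (seq 1 k')
  + (/2)^(S k') * wsum (S k') m (fun t => g (S k' :: t)).
Proof.
  rewrite wsum_S, seq_S, sumf_app, sumf_single. f_equal.
  - apply sumf_ext; intros a Ha. apply in_seq in Ha. f_equal. apply wsum_ext; intros t Ht.
    apply max_exp_tuples in Ht. change (max_exp (a :: t)) with (Nat.max a (max_exp t)).
    destruct (Nat.eqb_spec (Nat.max a (max_exp t)) (S k'));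
      destruct (Nat.eqb_spec (max_exp t) (S k')); auto; lia.
  - f_equal. apply wsum_ext; intros t Ht. apply max_exp_tuples in Ht.
    change ((if (Nat.max (S k') (max_exp t) =? S k')%nat then g (S k' :: t) else 0)
            = g (S k' :: t)).
    rewrite Nat.max_l by lia. now rewrite Nat.eqb_refl.
Qed.

(* Union bound over the coordinate attaining the maximum:
   E[phi(x + S_(m+1)); max = 2^k] <= (m+1) 2^(-k) E[phi(x + 2^k + S_m)]. *)
Section UnionBound.
Variable k' : nat.
Variable phi : R -> R.
Hypothesis phi_nonneg : forall y, 0 <= phi y.
Let k := S k'.

Definition at_max m x := wsum k m (fun t => if Nat.eqb (max_exp t) k then phi (x + S_of t) else 0).
Definition unrestricted m x := wsum k m (fun t => phi (x + S_of t)).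

Lemma unrestricted_S m x :
  unrestricted (S m) x = sumf (fun a => (/2)^a * unrestricted m (x + 2^a)) (seq 1 k).
Proof.
  unfold unrestricted. rewrite wsum_S. apply sumf_ext; intros a _. f_equal.
  apply wsum_ext; intros t _. simpl S_of. now rewrite Rplus_assoc.
Qed.

Lemma at_max_S m x :
  at_max (S m) x = sumf (fun a => (/2)^a * at_max m (x + 2^a)) (seq 1 k')
                   + (/2)^k * unrestricted m (x + 2^k).
Proof.
  unfold at_max, unrestricted, k. rewrite wsum_split_max. f_equal.
  - apply sumf_ext; intros a _. f_equal. apply wsum_ext; intros t _. simpl S_of.
    destruct (max_exp t =? S k')%nat; auto. now rewrite Rplus_assoc.
  - f_equal. apply wsum_ext; intros t _. simpl S_of. now rewrite Rplus_assoc.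
Qed.

Lemma at_max_union_bound m :
  forall x, at_max (S m) x <= INR (S m) * (/2)^k * unrestricted m (x + 2^k).
Proof.
  induction m; intros x.
  - rewrite at_max_S.
    replace (sumf _ _) with (0 * sumf (fun _ => 1) (seq 1 k')); [simpl INR; lra|].
    rewrite <- sumf_scal. apply sumf_ext; intros a _.
    unfold at_max. rewrite wsum_0. simpl. ring.
  - rewrite at_max_S.
    apply Rle_trans with
      (INR (S m) * (/2)^k * sumf (fun a => (/2)^a * unrestricted m (x + 2^k + 2^a)) (seq 1 k')
       + (/2)^k * unrestricted (S m) (x + 2^k)).
    + apply Rplus_le_compat_r. rewrite <- sumf_scal. apply sumf_le; intros a _.
      eapply Rle_trans; [apply Rmult_le_compat_l; [apply pow_le; lra| apply IHm]|].
      replace (x + 2^a + 2^k) with (x + 2^k + 2^a) by ring. right; ring.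
    + rewrite (unrestricted_S m (x + 2^k)).
      replace (seq 1 k) with (seq 1 k' ++ [k]) by (unfold k; rewrite seq_S; reflexivity).
      rewrite sumf_app, sumf_single.
      assert (0 <= (/2)^k * unrestricted m (x + 2^k + 2^k)).
      { apply Rmult_le_pos; [apply pow_le; lra| apply wsum_nonneg; auto]. }
      assert (0 <= INR (S m) * (/2)^k) by (apply Rmult_le_pos; [apply pos_INR| apply pow_le; lra]).
      rewrite (S_INR (S m)). nra.
Qed.

End UnionBound.

Definition max_mass k m := wsum k m (fun t => if Nat.eqb (max_exp t) k then 1 else 0).

Lemma max_mass_step k' m :
  max_mass (S k') (S m) = ptrunc k' * max_mass (S k') m + (/2)^(S k') * ptrunc (S k') ^ m.
Proof.
  unfold max_mass. rewrite (wsum_split_max k' m (fun _ => 1)), <- wsum_one. f_equal.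
  unfold ptrunc. rewrite Rmult_comm, <- sumf_scal. apply sumf_ext; intros; ring.
Qed.

Lemma ptrunc_bounds k : 0 <= ptrunc k /\ ptrunc k <= ptrunc (S k) /\ ptrunc (S k) <= 1.
Proof. rewrite !ptrunc_val. simpl. pose proof (pow_unit_interval (/2) k ltac:(lra)). lra. Qed.

Lemma max_mass_lower k' m : INR (S m) * (/2)^(S k') * ptrunc k' ^ m <= max_mass (S k') (S m).
Proof.
  induction m.
  - rewrite max_mass_step. unfold max_mass. rewrite wsum_0. simpl. lra.
  - rewrite max_mass_step. pose proof (ptrunc_bounds k').
    assert (ptrunc k' ^ S m <= ptrunc (S k') ^ S m) by (apply pow_incr; lra).
    assert (0 <= (/2)^(S k')) by (apply pow_le; lra).
    rewrite S_INR. simpl pow in *. nra.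
Qed.

Lemma total_mass_lower k' m : let D := 2 ^ S k' in
  INR (S m) * / D * (1 - 2 / D) ^ m <= mass (S m) (S k') (fun _ => true).
Proof.
  intros D.
  replace (mass (S m) (S k') (fun _ => true)) with (max_mass (S k') (S m)).
  - replace (/ D) with ((/2)^(S k')) by (unfold D; apply pow_inv).
    replace (1 - 2 / D) with (ptrunc k')
      by (rewrite ptrunc_val; unfold D; simpl; rewrite pow_inv; field; apply pow_nonzero; lra).
    apply max_mass_lower.
  - rewrite mass_wsum. apply wsum_ext; intros. now rewrite Bool.andb_true_r.
Qed.

Lemma chebyshev_pointwise eps v : 0 < eps -> eps < Rabs v -> 1 <= v^2 / eps^2.
Proof.
  intros Heps Hv. rewrite <- pow2_abs. apply Rmult_le_reg_r with (eps^2); [nra|].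
  field_simplify; nra.
Qed.

Lemma bad_mass_upper k' m c eps : 0 < eps ->
  let k := S k' in let D := 2 ^ k in
  mass (S m) k (fun e => if Rlt_dec eps (Rabs (S_of e / 2 ^ k - c - 1)) then true else false)
  <= INR (S m) * / D * (/ eps^2 * wsum k m (fun t => (S_of t / D - c)^2)).
Proof.
  intros Heps k D.
  set (phi := fun y => (y / D - c - 1)^2 / eps^2).
  assert (phi_nonneg : forall y, 0 <= phi y).
  { intros y; unfold phi. apply Rmult_le_pos; [apply pow2_ge_0|].
    apply Rlt_le, Rinv_0_lt_compat, pow_lt; lra. }
  eapply Rle_trans with (at_max k' phi (S m) 0).
  - rewrite mass_wsum. apply wsum_le; intros t _. fold k.
    destruct (Nat.eqb (max_exp t) k); simpl; [|lra].
    destruct (Rlt_dec eps _) as [Hbad|]; [|apply phi_nonneg].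
    unfold phi. rewrite Rplus_0_l. now apply chebyshev_pointwise.
  - eapply Rle_trans; [apply at_max_union_bound; exact phi_nonneg|]. fold k.
    replace ((/2)^k) with (/ D) by (unfold D; symmetry; apply pow_inv).
    right. f_equal. rewrite <- (Rplus_0_r (/ eps ^ 2 * _)),
      <- (Rmult_0_l (wsum k m (fun _ => 0))), <- wsum_lin.
    apply wsum_ext; intros. unfold phi, D. field. split; [apply pow_nonzero|]; lra.
Qed.

Lemma conditional_chebyshev m k' c eps : (1 <= k')%nat -> 0 < eps ->
  let k := S k' in let D := 2 ^ k in
  0 <= cond_prob (S m) k (fun e => if Rlt_dec eps (Rabs (S_of e / 2 ^ k - c - 1)) then true else false)
  <= (2 * (INR m / D) + (INR m * INR k / D - c * (1 - / D))^2)
     / ((1 - / D)^2 * eps^2 * (1 - 2 / D)^m).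
Proof.
  intros Hk Heps k D.
  assert (HD : 4 <= D) by (unfold D, k; replace 4 with (2^2) by ring; apply Rle_pow; [lra| lia]).
  assert (Hw : 0 < (1 - 2/D)^m).
  { apply pow_lt. apply Rlt_0_minus. apply Rmult_lt_reg_r with D; [lra|]. field_simplify; lra. }
  assert (HSm : 0 < INR (S m)) by (apply lt_0_INR; lia).
  assert (HiD : 0 < /D) by (apply Rinv_0_lt_compat; lra).
  assert (Hepsw : 0 < eps ^ 2 * (1 - 2/D)^m) by (apply Rmult_lt_0_compat; [apply pow_lt|]; lra).
  set (Bad := fun e => if Rlt_dec eps (Rabs (S_of e / 2 ^ k - c - 1)) then true else false).
  set (W := wsum k m (fun t => (S_of t / D - c)^2)).
  assert (Htot : INR (S m) * / D * (1 - 2 / D) ^ m <= mass (S m) k (fun _ => true))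
    by exact (total_mass_lower k' m).
  assert (Hbad : mass (S m) k Bad <= INR (S m) * / D * (/ eps^2 * W))
    by exact (bad_mass_upper k' m c eps Heps).
  assert (Hmom : W <= (2 * (INR m / D) + (INR m * INR k / D - c * (1 - / D))^2) / (1 - / D)^2)
    by exact (truncated_second_moment k m c ltac:(unfold k; lia)).
  assert (Hbad0 : 0 <= mass (S m) k Bad).
  { rewrite mass_wsum. apply wsum_nonneg; intros. destruct (_ && _)%bool; lra. }
  assert (Hlow0 : 0 < INR (S m) * / D * (1 - 2 / D) ^ m) by (repeat apply Rmult_lt_0_compat; auto).
  unfold cond_prob. split.
  - apply Rmult_le_pos; [exact Hbad0|]. apply Rlt_le, Rinv_0_lt_compat; lra.
  - apply Rle_trans with (mass (S m) k Bad / (INR (S m) * / D * (1 - 2 / D) ^ m)).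
    { apply Rmult_le_compat_l; [exact Hbad0|]. apply Rinv_le_contravar; auto. }
    apply Rle_trans with (W / (eps ^ 2 * (1 - 2/D)^m)).
    { replace (W / (eps ^ 2 * (1 - 2/D)^m))
        with (INR (S m) * / D * (/ eps^2 * W)
              / (INR (S m) * / D * (1 - 2 / D) ^ m)) by (field; repeat split; lra).
      apply Rmult_le_compat_r; [apply Rlt_le, Rinv_0_lt_compat|]; lra. }
    set (Q := 2 * (INR m / D) + (INR m * INR k / D - c * (1 - / D))^2) in *.
    assert (HD1 : 0 < (1 - / D)^2) by (apply pow_lt; apply Rmult_lt_reg_r with D; field_simplify; lra).
    replace (Q / ((1 - / D)^2 * eps^2 * (1 - 2 / D)^m))
      with (Q / (1 - / D)^2 * / (eps^2 * (1 - 2 / D)^m)) by (field; lra).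
    apply Rmult_le_compat_r; [apply Rlt_le, Rinv_0_lt_compat; lra| exact Hmom].
Qed.

Lemma ln_le_mono x y : 0 < x -> x <= y -> ln x <= ln y.
Proof. intros Hx [H|H]; [left; apply ln_increasing; auto| subst; lra]. Qed.

(* log2 grows slower than any power: log2 t <= 4 sqrt t, from ln s <= s - 1. *)
Lemma log2_le_sqrt t : 1 <= t -> log2 t <= 4 * sqrt t.
Proof.
  intros Ht. assert (Hs : 0 < sqrt t) by (apply sqrt_lt_R0; lra).
  assert (Hln2 := ln_lt_2).
  assert (Hln : ln t <= 2 * sqrt t).
  { replace t with (sqrt t * sqrt t) at 1 by (apply sqrt_sqrt; lra).
    rewrite ln_mult by auto.
    assert (ln (sqrt t) <= sqrt t - 1).
    { rewrite <- (ln_exp (sqrt t - 1)). apply ln_le_mono; auto.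
      pose proof (exp_ineq1_le (sqrt t - 1)). lra. }
    lra. }
  unfold log2. apply Rmult_le_reg_r with (ln 2); [lra|].
  unfold Rdiv. rewrite Rmult_assoc, Rinv_l, Rmult_1_r by lra. nra.
Qed.

Lemma log2_pos x : 1 < x -> 0 < log2 x.
Proof.
  intros Hx. unfold log2, Rdiv. apply Rmult_lt_0_compat.
  - rewrite <- ln_1. apply ln_increasing; lra.
  - apply Rinv_0_lt_compat. pose proof ln_lt_2. lra.
Qed.

Lemma Rpower_log2 y : 0 < y -> Rpower 2 (log2 y) = y.
Proof.
  intros Hy. unfold Rpower, log2. assert (ln 2 <> 0) by (pose proof ln_lt_2; lra).
  replace (ln y / ln 2 * ln 2) with (ln y) by (field; auto). apply exp_ln; auto.
Qed.

Lemma log2_eventually_large T :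
  exists N, forall n, (N <= n)%nat -> T <= INR n /\ T <= log2 (INR n).
Proof.
  assert (H2T : 0 < Rpower 2 T) by (unfold Rpower; apply exp_pos).
  set (X := Rpower 2 T + Rabs T).
  destruct (archimed X) as [HX _].
  exists (Z.to_nat (up X)). intros n Hn.
  assert (HnX : X <= INR n).
  { apply Rle_trans with (INR (Z.to_nat (up X))); [|apply le_INR; lia].
    rewrite INR_IZR_INZ, Z2Nat.id; [lra|]. apply le_IZR. pose proof (Rabs_pos T). unfold X in *. lra. }
  pose proof (Rle_abs T). pose proof (Rabs_pos T). unfold X in HnX.
  split; [lra|].
  rewrite <- (Rpower_log2 (INR n)) in HnX by lra.
  destruct (Rle_or_lt T (log2 (INR n))) as [|Hlt]; auto.
  apply Rpower_lt with (x := 2) in Hlt; lra.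
Qed.

Lemma k_seq_deviation j n : 1 <= log2 (INR n) ->
  let l := log2 (INR n) in
  Rabs (IZR (k_seq j n) - l) <= log2 l + 1 + Rabs (IZR j) /\ l - 1 - Rabs (IZR j) <= IZR (k_seq j n).
Proof.
  intros Hl1 l. fold l in Hl1.
  set (fr := frac_part (l + log2 l)).
  assert (Hfr : 0 <= fr < 1) by (destruct (base_fp (l + log2 l)); unfold fr; lra).
  assert (HK : IZR (k_seq j n) - l = log2 l - fr + IZR j).
  { unfold k_seq, fr, frac_part. rewrite plus_IZR. fold l. ring. }
  assert (Hlog : 0 <= log2 l).
  { unfold log2, Rdiv. apply Rmult_le_pos; [rewrite <- ln_1; apply ln_le_mono; lra|].
    apply Rlt_le, Rinv_0_lt_compat. pose proof ln_lt_2. lra. }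
  pose proof (Rle_abs (IZR j)). pose proof (Rle_abs (- IZR j)). rewrite Rabs_Ropp in *.
  rewrite HK. split; [|lra].
  apply Rabs_le. lra.
Qed.

Lemma k_seq_regime j d : 0 < d -> exists N, forall n, (N <= n)%nat ->
  2 <= INR n /\ / INR n <= d /\ 0 < log2 (INR n) /\ / log2 (INR n) <= d /\
  (2 <= k_seq j n)%Z /\ Rabs (IZR (k_seq j n) / log2 (INR n) - 1) <= d.
Proof.
  intros Hd. set (J := Rabs (IZR j)). assert (HJ : 0 <= J) by apply Rabs_pos.
  set (T := Rmax (Rmax ((8/d)^2) (2*(1+J)/d)) (Rmax (1/d) (J + 3))).
  assert (HT : (8/d)^2 <= T /\ 2*(1+J)/d <= T /\ 1/d <= T /\ J + 3 <= T).
  { unfold T. repeat split.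
    - apply Rle_trans with (Rmax ((8/d)^2) (2*(1+J)/d)); apply Rmax_l.
    - apply Rle_trans with (Rmax ((8/d)^2) (2*(1+J)/d)); [apply Rmax_r| apply Rmax_l].
    - apply Rle_trans with (Rmax (1/d) (J + 3)); [apply Rmax_l| apply Rmax_r].
    - apply Rle_trans with (Rmax (1/d) (J + 3)); apply Rmax_r. }
  destruct HT as (Hsq & HJl & Hdl & H3l).
  destruct (log2_eventually_large T) as [N HN].
  exists N. intros n Hn. destruct (HN n Hn) as [HTn HTl].
  set (l := log2 (INR n)) in *.
  assert (Hinv : forall x, 1/d <= x -> / x <= d).
  { intros x Hx. replace d with (/ (1/d)) by (field; lra).
    apply Rinv_le_contravar; [unfold Rdiv; rewrite Rmult_1_l; apply Rinv_0_lt_compat|]; lra. }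
  destruct (k_seq_deviation j n ltac:(fold l; lra)) as [Hdev Hlow]. fold l J in Hdev, Hlow.
  assert (Hlog : log2 l <= d / 2 * l).
  { assert (Hq : 8/d <= sqrt l).
    { rewrite <- (sqrt_pow2 (8/d)); [apply sqrt_le_1_alt; lra|].
      unfold Rdiv; apply Rmult_le_pos; [lra| apply Rlt_le, Rinv_0_lt_compat; lra]. }
    pose proof (log2_le_sqrt l ltac:(lra)). pose proof (sqrt_sqrt l ltac:(lra)).
    assert (8 <= d * sqrt l).
    { apply Rmult_le_compat_l with (r := d) in Hq; [|lra].
      replace (d * (8 / d)) with 8 in Hq by (field; lra). lra. }
    nra. }
  assert (HJd : 1 + J <= d / 2 * l).
  { apply Rmult_le_compat_r with (r := d) in HJl; [|lra].
    replace (2 * (1 + J) / d * d) with (2 * (1 + J)) in HJl by (field; lra). nra. }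
  repeat split; try lra; try (apply Hinv; lra).
  - apply le_IZR. simpl. lra.
  - replace (IZR (k_seq j n) / l - 1) with ((IZR (k_seq j n) - l) / l) by (field; lra).
    unfold Rdiv. rewrite Rabs_mult, (Rabs_right (/ l)) by (apply Rle_ge, Rlt_le, Rinv_0_lt_compat; lra).
    apply Rmult_le_reg_r with l; [lra|]. rewrite Rmult_assoc, Rinv_l, Rmult_1_r by lra. lra.
Qed.

Lemma scale_identity j n : 1 < INR n -> (0 <= k_seq j n)%Z ->
  powerRZ 2 (- j) * Rpower 2 (frac_part (log2 (INR n) + log2 (log2 (INR n))))
    * 2 ^ Z.to_nat (k_seq j n)
  = INR n * log2 (INR n).
Proof.
  intros Hn HK. pose proof (log2_pos _ Hn) as Hl.
  rewrite powerRZ_Rpower by lra.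
  rewrite <- (Rpower_pow _ 2) by lra. rewrite (INR_IZR_INZ (Z.to_nat _)), Z2Nat.id by exact HK.
  rewrite <- !Rpower_plus, opp_IZR.
  unfold k_seq, frac_part. rewrite plus_IZR.
  replace (- IZR j + (log2 (INR n) + log2 (log2 (INR n)) - IZR (Int_part (log2 (INR n) + log2 (log2 (INR n)))))
           + (IZR (Int_part (log2 (INR n) + log2 (log2 (INR n)))) + IZR j))
    with (log2 (INR n) + log2 (log2 (INR n))) by ring.
  rewrite Rpower_plus, !Rpower_log2 by lra. reflexivity.
Qed.

Lemma bernoulli_lower a m : 0 <= a <= 1 -> 1 - INR m * a <= (1 - a)^m.
Proof.
  intros Ha. induction m; [simpl; lra|]. rewrite S_INR; simpl pow.
  assert (0 <= INR m) by apply pos_INR. nra.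
Qed.

Lemma scaled_terms_small (n l D c P s d : R) :
  1 <= n -> 0 < l -> 0 < D -> 0 < P -> 0 < c <= 2*P -> c * D = n * l ->
  Rabs s <= d -> / l <= d -> / n <= d -> 0 < d <= 1 ->
  (n-1)/D <= 2*P*d /\ Rabs ((n-1) * (l*(1+s))/D - c*(1 - /D)) <= (6*P + 4*P^2)*d.
Proof.
  intros Hn Hl HD HP Hc HcD Hs Hil Hin Hd.
  assert (HDe : D = n * l / c) by (rewrite <- HcD; field; lra).
  assert (Hin0 : 0 < /n) by (apply Rinv_0_lt_compat; lra).
  assert (Hil0 : 0 < /l) by (apply Rinv_0_lt_compat; lra).
  split.
  - rewrite HDe. replace ((n-1)/(n*l/c)) with (c * /l * (1 - /n)) by (field; lra).
    assert (c * /l <= 2*P*d) by (apply Rmult_le_compat; lra).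
    assert (0 <= c * /l) by (apply Rmult_le_pos; lra).
    nra.
  - replace ((n-1) * (l*(1+s))/D - c*(1 - /D)) with (c * s - (1+s) * c * /n + c^2 * /n * /l)
      by (rewrite HDe; field; lra).
    assert (A1 : Rabs (c*s) <= 2*P*d). { rewrite Rabs_mult, (Rabs_right c) by lra. nra. }
    assert (A2 : Rabs ((1+s)*c*/n) <= 4*P*d).
    { rewrite !Rabs_mult, (Rabs_right c), (Rabs_right (/n)) by lra.
      pose proof (Rabs_triang 1 s). rewrite Rabs_R1 in H.
      assert (0 <= Rabs (1+s) <= 2) by (split; [apply Rabs_pos| lra]).
      apply Rle_trans with (2 * (2*P) * d); [|lra].
      apply Rmult_le_compat; try lra; [apply Rmult_le_pos; lra| apply Rmult_le_compat; lra]. }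
    assert (A3 : Rabs (c^2 * /n * /l) <= 4*P^2*d).
    { rewrite Rabs_right by (apply Rle_ge; apply Rmult_le_pos; [apply Rmult_le_pos|]; nra).
      assert (c^2 <= 4*P^2) by nra.
      assert (c^2 * /n <= 4*P^2 * 1) by (apply Rmult_le_compat; nra).
      apply Rmult_le_compat; nra. }
    pose proof (Rabs_triang (c * s - (1+s)*c*/n) (c^2 * /n * /l)).
    pose proof (Rabs_triang (c * s) (- ((1+s)*c*/n))). rewrite Rabs_Ropp in *.
    unfold Rminus in *. lra.
Qed.

Lemma chebyshev_estimate_small x delta D w eps e eta :
  0 < eps -> 0 < e -> 0 <= x <= eta -> Rabs delta <= eta -> eta <= 1/4 -> eta <= e * eps^2 / 10 ->
  4 <= D -> 1 - 2*x <= w ->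
  (2*x + delta^2) / ((1 - /D)^2 * eps^2 * w) < e.
Proof.
  intros Heps He Hx Hdelta Heta1 Heta2 HD Hw.
  assert (HiD : 0 < /D <= 1/4).
  { split; [apply Rinv_0_lt_compat; lra|]. replace (1/4) with (/4) by lra.
    apply Rinv_le_contravar; lra. }
  assert (Heps2 : 0 < eps^2) by nra.
  assert (Hden : eps^2 / 4 <= (1 - /D)^2 * eps^2 * w).
  { assert (9/16 <= (1 - /D)^2) by (simpl; nra).
    assert (9/16 * eps^2 <= (1 - /D)^2 * eps^2) by (apply Rmult_le_compat_r; lra).
    nra. }
  assert (delta^2 <= eta^2) by (rewrite <- (pow2_abs delta); pose proof (Rabs_pos delta); nra).
  apply Rle_lt_trans with ((2*x + delta^2) / (eps^2/4)).
  - unfold Rdiv. apply Rmult_le_compat_l; [nra|]. apply Rinv_le_contravar; lra.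
  - apply Rmult_lt_reg_r with (eps^2/4); [lra|].
    unfold Rdiv at 1. rewrite Rmult_assoc, Rinv_l by lra. nra.
Qed.

Lemma chebyshev_bound_small P eps e : 0 < P -> 0 < eps -> 0 < e ->
  exists d, 0 < d /\ forall (m k : nat) (l D c : R),
    0 < l -> 4 <= D -> 0 < c <= 2 * P -> c * D = INR (S m) * l ->
    Rabs (INR k / l - 1) <= d -> / l <= d -> / INR (S m) <= d ->
    (2 * (INR m / D) + (INR m * INR k / D - c * (1 - / D))^2)
      / ((1 - / D)^2 * eps^2 * (1 - 2 / D)^m) < e.
Proof.
  intros HP Heps He.
  set (eta := Rmin (1/4) (e * eps^2 / 10)).
  assert (Heps2 : 0 < e * eps^2 / 10) by (assert (0 < eps^2) by nra; nra).
  assert (Heta : 0 < eta) by (apply Rmin_glb_lt; lra).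
  assert (Heta1 : eta <= 1/4) by apply Rmin_l.
  assert (Heta2 : eta <= e * eps^2 / 10) by apply Rmin_r.
  set (C := 6*P + 4*P^2 + 2*P + 1).
  assert (HC : 1 <= C) by (unfold C; nra).
  set (d := eta / C).
  assert (HdC : d * C = eta) by (unfold d; field; lra).
  assert (Hd : 0 < d <= eta) by (clearbody d; split; nra).
  exists d. split; [lra|].
  intros m k l D c Hl HD Hc HcD Hs Hil Hin.
  assert (Hn : INR m = INR (S m) - 1) by (rewrite S_INR; ring).
  assert (Hk : INR k = l * (1 + (INR k / l - 1))) by (field; lra).
  destruct (scaled_terms_small (INR (S m)) l D c P (INR k / l - 1) d)
    as [Hx Hdelta]; try lra.
  { rewrite S_INR. pose proof (pos_INR m). lra. }
  rewrite <- Hn in Hx. rewrite <- Hn, <- Hk in Hdelta.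
  apply chebyshev_estimate_small with eta; auto.
  - split; [apply Rmult_le_pos; [apply pos_INR| apply Rlt_le, Rinv_0_lt_compat; lra]|].
    unfold C in HdC. nra.
  - unfold C in HdC. assert (0 <= d * (2 * P + 1)) by nra. lra.
  - replace (1 - 2 * (INR m / D)) with (1 - INR m * (2 / D)) by (field; lra).
    apply bernoulli_lower. split; [apply Rmult_le_pos; [lra| apply Rlt_le, Rinv_0_lt_compat; lra]|].
    apply Rmult_le_reg_r with D; [lra|]. unfold Rdiv. rewrite Rmult_assoc, Rinv_l by lra. lra.
Qed.

Lemma Rpower2_frac_bounds x : 0 < Rpower 2 (frac_part x) <= 2.
Proof.
  destruct (base_fp x) as [Hfr0 Hfr1]. split; [unfold Rpower; apply exp_pos|].
  rewrite <- (Rpower_1 2) at 2 by lra. apply Rle_Rpower; lra.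
Qed.

Theorem mainTheorem7 (j : Z) :
  forall eps : R, 0 < eps ->
  Un_cv
    (fun n : nat =>
       cond_prob n (Z.to_nat (k_seq j n))
         (fun e =>
            if Rlt_dec eps
                 (Rabs (S_of e / 2 ^ Z.to_nat (k_seq j n)
                        - powerRZ 2 (- j)
                          * Rpower 2 (frac_part (log2 (INR n) + log2 (log2 (INR n))))
                        - 1))
            then true else false))
    0.
Proof.
  intros eps Heps e He.
  set (P := powerRZ 2 (- j)). assert (HP : 0 < P) by (apply powerRZ_lt; lra).
  destruct (chebyshev_bound_small P eps e HP Heps He) as [d [Hd Hsmall]].
  destruct (k_seq_regime j d Hd) as [N HN].
  exists N. intros n Hn.
  destruct (HN n Hn) as (Hn2 & Hin & Hl & Hil & HK & Hdev).
  set (c := P * Rpower 2 (frac_part (log2 (INR n) + log2 (log2 (INR n))))).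
  assert (Hc : 0 < c <= 2 * P).
  { pose proof (Rpower2_frac_bounds (log2 (INR n) + log2 (log2 (INR n)))). unfold c. nra. }
  assert (HcD : c * 2 ^ Z.to_nat (k_seq j n) = INR n * log2 (INR n))
    by (apply scale_identity; [lra| lia]).
  destruct n as [|m]; [simpl in Hn2; lra|].
  destruct (Z.to_nat (k_seq j (S m))) as [|[|k']] eqn:Hk; [lia| lia|].
  assert (HkR : INR (S (S k')) = IZR (k_seq j (S m))) by (rewrite <- Hk, INR_IZR_INZ, Z2Nat.id by lia; reflexivity).
  destruct (conditional_chebyshev m (S k') c eps ltac:(lia) Heps) as [Hlo Hhi].
  unfold R_dist. rewrite Rminus_0_r, Rabs_right by (apply Rle_ge; exact Hlo).
  eapply Rle_lt_trans; [exact Hhi|].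
  apply Hsmall with (log2 (INR (S m))); rewrite ?HkR; auto.
  replace 4 with (2 ^ 2) by ring. apply Rle_pow; [lra| lia].
Qed.
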